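(* There exists a constant $C$ such that for every integer $t\ge0$ whose binary expansion has $M$ maximal blocks of $1$s, \[|\kappa_2(t)|\le CM,\quad |\kappa_3(t)|\le CM,\quad |\kappa_4(t)|\le CM,\quad |\kappa_5(t)|\le CM.\]
   Context: $s(n)$ is the number of $1$s in the binary expansion of $n\ge0$. For integers $j$ and $t\ge0$, $\delta(j,t)=\lim_{N\to\infty}\frac1N|\{0\le n<N: s(n+t)-s(n)=j\}|$, a probability distribution on $\mathbb Z$. $\kappa_j(t)$ denotes the $j$-th cumulant of this distribution, i.e. the real numbers with $\log\sum_{k\in\mathbb Z}\delta(k,t)e^{2\pi i k\vartheta}=\sum_{j\ge0}\frac{\kappa_j(t)}{j!}(2\pi i\vartheta)^j$ for $\vartheta$ near $0$. A maximal block of $1$s is a maximal run of consecutive binary digits equal to $1$. *)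

From Stdlib Require Import Reals ZArith Arith List.
From Coquelicot Require Import Coquelicot.
Import ListNotations.
Open Scope R_scope.

Definition s (n : nat) : nat :=
  length (filter (fun i => Nat.testbit n i) (seq 0 (S (Nat.log2 n)))).

Definition blocks (t : nat) : nat :=
  length (filter (fun i => Nat.testbit t i &&
                           (Nat.eqb i 0 || negb (Nat.testbit t (i - 1))))%bool
                 (seq 0 (S (Nat.log2 t)))).

Definition count_diff (j : Z) (t N : nat) : nat :=
  length (filter (fun n => Z.eqb (Z.of_nat (s (n + t)) - Z.of_nat (s n))%Z j)
                 (seq 0 N)).

Definition delta (j : Z) (t : nat) : R :=
  real (Lim_seq (fun N => INR (count_diff j t N) / INR N)).

(* Moment generating function x |-> sum_{k in Z} delta(k,t) e^{k x},
   the sum over Z split into k >= 0 and k <= -1. *)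
Definition mgf (t : nat) (x : R) : R :=
  Series (fun k => delta (Z.of_nat k) t * exp (INR k * x))
  + Series (fun k => delta (- Z.of_nat (S k))%Z t * exp (- INR (S k) * x)).

Definition cumulant (t j : nat) : R :=
  Derive_n (fun x => ln (mgf t x)) j 0.

From Stdlib Require Import Reals ZArith Arith List Lia Lra FunctionalExtensionality.
From Coquelicot Require Import Coquelicot.
Import ListNotations.
Open Scope R_scope.

(* Let phi_t(x) = sum_j delta(j, t) e^(jx). Splitting n by parity gives delta(., 2t) = delta(., t)
   and delta(j, 2t+1) = (delta(j-1, t) + delta(j+1, t+1)) / 2, so phi_(2t) = phi_t,
   phi_(2t+1) = (e^x phi_t + e^(-x) phi_(t+1)) / 2, phi_0 = 1 and phi_1 = e^x / (2 - e^(-x)).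
   The cumulants kappa_k(t), k <= 5, are k! times the Taylor coefficients of log phi_t at 0, so
   it suffices to bound the 5-jet of log phi_t in the submultiplicative norm
   |a| = sum_k |a_k| 100^(-k).
   The ratio rho_t = phi_(t+1) / phi_t satisfies rho_(2t) = F(rho_t) and
   rho_(2t+1) = rho_t / F(rho_t) with F(r) = (e^x + e^(-x) r) / 2, while
   log phi_(2t+1) = log phi_t + log F(rho_t). Both maps keep rho_t close to the point
   rho_inf = 2e^x - e^(2x) where F(rho_inf) = 1, and the second one contracts towards rho_inf
   by a factor 0.52. Along a block of 1s the increments log F(rho_t) = O(|rho_t - rho_inf|)
   therefore decay geometrically and add up to at most 1, which gives |log phi_t| <= M(t). *)

(** * Binary expansions *)

Definition count_upto (f : nat -> bool) (K : nat) : nat := length (filter f (seq 0 K)).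

Lemma count_upto_succ f K :
  count_upto f (S K) = (Nat.b2n (f 0%nat) + count_upto (fun i => f (S i)) K)%nat.
Proof.
  unfold count_upto. simpl. rewrite <- seq_shift, filter_map_swap.
  destruct (f 0%nat); simpl; rewrite length_map; reflexivity.
Qed.

Lemma count_upto_ext f g K : (forall i, f i = g i) -> count_upto f K = count_upto g K.
Proof. intros H. unfold count_upto. f_equal. apply filter_ext. auto. Qed.

Lemma count_upto_stable f n K :
  (forall i, (n <= i)%nat -> f i = false) -> (n <= K)%nat -> count_upto f K = count_upto f n.
Proof.
  intros Hf HK. unfold count_upto. replace K with (n + (K - n))%nat by lia.
  rewrite seq_app, filter_app, length_app.
  enough (filter f (seq (0 + n) (K - n)) = []) as -> by (simpl; lia).
  rewrite (filter_ext_in f (fun _ => false)); [apply filter_false|].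
  intros i Hi. apply in_seq in Hi. apply Hf. lia.
Qed.

Lemma s_count n K : (S (Nat.log2 n) <= K)%nat -> s n = count_upto (Nat.testbit n) K.
Proof.
  intros HK. symmetry. apply count_upto_stable; auto.
  intros i Hi. apply Nat.bits_above_log2. lia.
Qed.

Lemma s_double_plus m (b : bool) : s (2 * m + Nat.b2n b) = (Nat.b2n b + s m)%nat.
Proof.
  set (K := S (Nat.log2 (2 * m + Nat.b2n b) + Nat.log2 m)).
  rewrite (s_count _ (S K)), (s_count m K) by (unfold K; lia).
  rewrite count_upto_succ, Nat.testbit_0_r. f_equal.
  apply count_upto_ext. intros i. apply Nat.testbit_succ_r.
Qed.

Lemma s_double m : s (2 * m) = s m.
Proof.
  pose proof (s_double_plus m false) as H. simpl Nat.b2n in H.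
  rewrite Nat.add_0_r in H. exact H.
Qed.

Lemma s_double_succ m : s (2 * m + 1) = S (s m).
Proof. exact (s_double_plus m true). Qed.

Definition block_start (t i : nat) : bool :=
  (Nat.testbit t i && (Nat.eqb i 0 || negb (Nat.testbit t (i - 1))))%bool.

Lemma blocks_count t K : (S (Nat.log2 t) <= K)%nat -> blocks t = count_upto (block_start t) K.
Proof.
  intros HK. symmetry. apply count_upto_stable; auto.
  intros i Hi. unfold block_start. rewrite Nat.bits_above_log2 by lia. reflexivity.
Qed.

Lemma blocks_double_plus m (b : bool) :
  blocks (2 * m + Nat.b2n b) = (blocks m + Nat.b2n (b && negb (Nat.odd m)))%nat.
Proof.
  set (K := S (Nat.log2 (2 * m + Nat.b2n b) + Nat.log2 m)).
  rewrite (blocks_count _ (S (S K))), (blocks_count m (S K)) by (unfold K; lia).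
  rewrite !count_upto_succ.
  rewrite (count_upto_ext (fun i => block_start _ (S (S i))) (fun i => block_start m (S i))).
  2: { intros i. unfold block_start. simpl Nat.sub.
       rewrite Nat.sub_0_r, !Nat.testbit_succ_r. reflexivity. }
  unfold block_start. simpl Nat.sub. simpl Nat.eqb.
  rewrite Nat.testbit_succ_r, Nat.testbit_0_r, <- Nat.bit0_odd.
  clearbody K. destruct b, (Nat.testbit m 0); cbn [andb orb negb Nat.b2n]; lia.
Qed.

Lemma blocks_double m : blocks (2 * m) = blocks m.
Proof.
  pose proof (blocks_double_plus m false) as H. cbn [andb Nat.b2n] in H.
  rewrite !Nat.add_0_r in H. exact H.
Qed.

Lemma blocks_double_succ m : blocks (2 * m + 1) = (blocks m + Nat.b2n (negb (Nat.odd m)))%nat.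
Proof. exact (blocks_double_plus m true). Qed.

Lemma nat_binary_ind (P : nat -> Prop) :
  P 0%nat -> P 1%nat ->
  (forall t, P t -> P (2 * t)%nat) ->
  (forall t, P t -> P (S t) -> P (2 * t + 1)%nat) ->
  forall t, P t.
Proof.
  intros H0 H1 Hev Hodd.
  enough (H : forall t, P t /\ P (S t)) by (intros t; apply H).
  intros t. induction t as [t IH] using lt_wf_ind.
  destruct t as [|t']; [auto|].
  pose proof (Nat.div2_odd (S t')) as Hd. set (u := Nat.div2 (S t')) in *.
  destruct (IH u) as [Pu PSu]; [apply Nat.lt_div2; lia|].
  destruct (Nat.odd (S t')); simpl Nat.b2n in Hd; rewrite Hd.
  - split; auto. replace (S (2 * u + 1)) with (2 * S u)%nat by lia. auto.
  - rewrite Nat.add_0_r. split; auto. rewrite <- Nat.add_1_r. auto.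
Qed.

Section BinaryRecursion.

Variable A : Type.
Variables (a0 a1 : A) (mix : A -> A -> A).
Hypothesis mix_a0_a1 : mix a0 a1 = a1.

(* [brec_pos q] is the pair (f q, f (q + 1)) for the function f with
   f 0 = a0, f 1 = a1, f (2t) = f t and f (2t+1) = mix (f t) (f (t+1)). *)
Fixpoint brec_pos (q : positive) : A * A :=
  match q with
  | xH => (a1, a1)
  | xO q' => let (u, v) := brec_pos q' in (u, mix u v)
  | xI q' => let (u, v) := brec_pos q' in (mix u v, v)
  end.

Definition brec_pair (t : nat) : A * A :=
  match t with O => (a0, a1) | _ => brec_pos (Pos.of_nat t) end.

Definition brec (t : nat) : A := fst (brec_pair t).

Lemma brec_pair_double t :
  brec_pair (2 * t) = (fst (brec_pair t), mix (fst (brec_pair t)) (snd (brec_pair t))).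
Proof.
  destruct t as [|t]; [simpl; rewrite mix_a0_a1; reflexivity|].
  unfold brec_pair. replace (2 * S t)%nat with (S (S (2 * t))) by lia.
  replace (Pos.of_nat (S (S (2 * t)))) with (xO (Pos.of_nat (S t))).
  - set (q := Pos.of_nat (S t)). simpl brec_pos. destruct (brec_pos q); reflexivity.
  - replace (S (S (2 * t))) with (2 * S t)%nat by lia. rewrite Nat2Pos.inj_mul by lia. reflexivity.
Qed.

Lemma brec_pair_double_succ t :
  brec_pair (2 * t + 1) = (mix (fst (brec_pair t)) (snd (brec_pair t)), snd (brec_pair t)).
Proof.
  destruct t as [|t]; [simpl; rewrite mix_a0_a1; reflexivity|].
  unfold brec_pair. replace (2 * S t + 1)%nat with (S (S (S (2 * t)))) by lia.
  replace (Pos.of_nat (S (S (S (2 * t))))) with (xI (Pos.of_nat (S t))).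
  - set (q := Pos.of_nat (S t)). simpl brec_pos. destruct (brec_pos q); reflexivity.
  - replace (S (S (S (2 * t)))) with (S (2 * S t)) by lia.
    rewrite (Nat2Pos.inj_succ (2 * S t)), Nat2Pos.inj_mul by lia. reflexivity.
Qed.

Lemma brec_pair_snd t : snd (brec_pair t) = brec (S t).
Proof.
  unfold brec. revert t. apply nat_binary_ind; [reflexivity|reflexivity| |].
  - intros t H. rewrite brec_pair_double. replace (S (2 * t)) with (2 * t + 1)%nat by lia.
    rewrite brec_pair_double_succ. reflexivity.
  - intros t H _. rewrite brec_pair_double_succ. replace (S (2 * t + 1)) with (2 * S t)%nat by lia.
    rewrite brec_pair_double. simpl. exact H.
Qed.

Lemma brec_double t : brec (2 * t) = brec t.
Proof. unfold brec. rewrite brec_pair_double. reflexivity. Qed.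

Lemma brec_double_succ t : brec (2 * t + 1) = mix (brec t) (brec (S t)).
Proof. unfold brec at 1. rewrite brec_pair_double_succ, brec_pair_snd. reflexivity. Qed.

End BinaryRecursion.

(** * The densities delta(., t) *)

Definition sdiff (n t : nat) : Z := (Z.of_nat (s (n + t)) - Z.of_nat (s n))%Z.

Lemma count_diff_succ j t N :
  count_diff j t (S N) = (count_diff j t N + Nat.b2n (Z.eqb (sdiff N t) j))%nat.
Proof.
  unfold count_diff. rewrite seq_S, filter_app, length_app. simpl.
  unfold sdiff. destruct (Z.eqb _ j); reflexivity.
Qed.

Lemma sdiff_shift_0 n : sdiff n 0 = 0%Z.
Proof. unfold sdiff. rewrite Nat.add_0_r. lia. Qed.

Lemma sdiff_shift_double m b t : sdiff (2 * m + Nat.b2n b) (2 * t) = sdiff m t.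
Proof.
  unfold sdiff. replace (2 * m + Nat.b2n b + 2 * t)%nat with (2 * (m + t) + Nat.b2n b)%nat by lia.
  rewrite !s_double_plus. lia.
Qed.

Lemma sdiff_even_shift_odd m t : sdiff (2 * m) (2 * t + 1) = (sdiff m t + 1)%Z.
Proof.
  unfold sdiff. replace (2 * m + (2 * t + 1))%nat with (2 * (m + t) + 1)%nat by lia.
  rewrite s_double_succ, s_double. lia.
Qed.

Lemma sdiff_odd_shift_odd m t : sdiff (2 * m + 1) (2 * t + 1) = (sdiff m (S t) - 1)%Z.
Proof.
  unfold sdiff. replace (2 * m + 1 + (2 * t + 1))%nat with (2 * (m + S t))%nat by lia.
  rewrite s_double_succ, s_double. lia.
Qed.

Lemma count_diff_shift_0 j N : count_diff j 0 N = if Z.eqb j 0 then N else 0%nat.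
Proof.
  induction N as [|N IH]; [destruct (Z.eqb j 0); reflexivity|].
  rewrite count_diff_succ, IH, sdiff_shift_0.
  destruct (Z.eqb_spec j 0), (Z.eqb_spec 0 j); simpl; lia.
Qed.

Lemma count_diff_shift_double j t N : count_diff j (2 * t) (2 * N) = (2 * count_diff j t N)%nat.
Proof.
  induction N as [|N IH]; [reflexivity|].
  replace (2 * S N)%nat with (S (S (2 * N))) by lia.
  pose proof (sdiff_shift_double N false t) as Heven.
  pose proof (sdiff_shift_double N true t) as Hodd.
  simpl Nat.b2n in Heven, Hodd. rewrite Nat.add_0_r in Heven. rewrite Nat.add_1_r in Hodd.
  rewrite !count_diff_succ, IH, Heven, Hodd. lia.
Qed.

Lemma count_diff_shift_double_succ j t N :
  count_diff j (2 * t + 1) (2 * N) = (count_diff (j - 1) t N + count_diff (j + 1) (S t) N)%nat.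
Proof.
  induction N as [|N IH]; [reflexivity|].
  replace (2 * S N)%nat with (S (S (2 * N))) by lia.
  rewrite !count_diff_succ, IH. replace (S (2 * N)) with (2 * N + 1)%nat by lia.
  rewrite sdiff_even_shift_odd, sdiff_odd_shift_odd.
  destruct (Z.eqb_spec (sdiff N t + 1) j), (Z.eqb_spec (sdiff N t) (j - 1)),
           (Z.eqb_spec (sdiff N (S t) - 1) j), (Z.eqb_spec (sdiff N (S t)) (j + 1)); simpl; lia.
Qed.

Definition shift_mix (a b : Z -> R) : Z -> R := fun j => (a (j - 1)%Z + b (j + 1)%Z) / 2.

Definition dens0 (j : Z) : R := if Z.eqb j 0 then 1 else 0.

Definition dens1 (j : Z) : R := if Z.leb j 1 then (/ 2) ^ Z.to_nat (2 - j) else 0.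

Lemma dens1_succ j : dens1 (j + 1) = 2 * dens1 j - INR (Nat.b2n (Z.eqb j 1)).
Proof.
  unfold dens1. destruct (Z.eqb_spec j 1) as [->|Hj]; [simpl; field|].
  destruct (Z.leb_spec (j + 1) 1), (Z.leb_spec j 1); try lia; simpl INR.
  - replace (Z.to_nat (2 - j)) with (S (Z.to_nat (2 - (j + 1)))) by lia. simpl. field.
  - lra.
Qed.

Lemma shift_mix_dens : shift_mix dens0 dens1 = dens1.
Proof.
  apply functional_extensionality. intros j. unfold shift_mix.
  rewrite dens1_succ. unfold dens0.
  destruct (Z.eqb_spec (j - 1) 0), (Z.eqb_spec j 1); simpl INR; try lia; field.
Qed.

Lemma dens1_bounds j : 0 <= dens1 j <= 1.
Proof.
  unfold dens1. destruct (Z.leb j 1); [|lra]. split.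
  - apply pow_le. lra.
  - rewrite <- (pow1 (Z.to_nat (2 - j))). apply pow_maj_Rabs. rewrite Rabs_right; lra.
Qed.

Definition density (t : nat) : Z -> R := brec _ dens0 dens1 shift_mix t.

Lemma density_0 : density 0 = dens0.
Proof. reflexivity. Qed.

Lemma density_1 : density 1 = dens1.
Proof. reflexivity. Qed.

Lemma density_double t : density (2 * t) = density t.
Proof. apply brec_double, shift_mix_dens. Qed.

Lemma density_double_succ t : density (2 * t + 1) = shift_mix (density t) (density (S t)).
Proof. apply brec_double_succ, shift_mix_dens. Qed.

Lemma density_bounds t j : 0 <= density t j <= 1.
Proof.
  revert j. induction t as [| |t H|t H H'] using nat_binary_ind.
  - intros j. rewrite density_0. unfold dens0. destruct (Z.eqb j 0); lra.
  - apply dens1_bounds.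
  - intros j. rewrite density_double. apply H.
  - intros j. rewrite density_double_succ. unfold shift_mix.
    specialize (H (j - 1)%Z). specialize (H' (j + 1)%Z). lra.
Qed.

Lemma INR_b2n_bounds b : 0 <= INR (Nat.b2n b) <= 1.
Proof. destruct b; simpl; lra. Qed.

Lemma INR_double n : INR (2 * n) = 2 * INR n.
Proof. rewrite mult_INR. reflexivity. Qed.

Lemma approx_from_even (c : nat -> nat) (p E : R) :
  (forall N, exists b, c (S N) = (c N + Nat.b2n b)%nat) ->
  (forall M, Rabs (INR (c (2 * M)%nat) - INR (2 * M) * p) <= E) ->
  forall N, Rabs (INR (c N) - INR N * p) <= E + 1 + Rabs p.
Proof.
  intros Hstep Heven N. pose proof (Rabs_pos p).
  rewrite (Nat.div2_odd N). set (M := Nat.div2 N). specialize (Heven M).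
  destruct (Nat.odd N); simpl Nat.b2n; [|rewrite Nat.add_0_r; lra].
  rewrite Nat.add_1_r. destruct (Hstep (2 * M)%nat) as [b ->].
  rewrite plus_INR, S_INR. pose proof (INR_b2n_bounds b) as Hb.
  replace (INR (c (2 * M)%nat) + INR (Nat.b2n b) - (INR (2 * M) + 1) * p)
    with ((INR (c (2 * M)%nat) - INR (2 * M) * p) + (INR (Nat.b2n b) - p)) by ring.
  assert (Rabs (INR (Nat.b2n b) - p) <= 1 + Rabs p).
  { eapply Rle_trans; [apply Rabs_triang|]. rewrite Rabs_Ropp, (Rabs_right (INR _)) by lra. lra. }
  eapply Rle_trans; [apply Rabs_triang|]. lra.
Qed.

Lemma count_diff_step j t N : exists b, count_diff j t (S N) = (count_diff j t N + Nat.b2n b)%nat.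
Proof. eexists. apply count_diff_succ. Qed.

Lemma count_diff_1_double j N :
  count_diff j 1 (2 * N) = (Nat.b2n (Z.eqb j 1) * N + count_diff (j + 1) 1 N)%nat.
Proof.
  pose proof (count_diff_shift_double_succ j 0 N) as H. change (2 * 0 + 1)%nat with 1%nat in H.
  rewrite H, count_diff_shift_0.
  destruct (Z.eqb_spec (j - 1) 0), (Z.eqb_spec j 1); simpl; lia.
Qed.

Lemma count_diff_1_double_succ j N :
  count_diff j 1 (2 * N + 1) = (count_diff j 1 (2 * N) + Nat.b2n (Z.eqb 1 j))%nat.
Proof.
  rewrite Nat.add_1_r, count_diff_succ.
  pose proof (sdiff_even_shift_odd N 0) as H. change (2 * 0 + 1)%nat with 1%nat in H.
  rewrite sdiff_shift_0 in H. now rewrite H.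
Qed.

Definition error1 (j : Z) (N : nat) : R := INR (count_diff j 1 N) - INR N * dens1 j.

Lemma error1_double j N : error1 j (2 * N) = error1 (j + 1) N.
Proof.
  unfold error1. rewrite count_diff_1_double, plus_INR, mult_INR, INR_double, dens1_succ. ring.
Qed.

Lemma error1_double_succ j N :
  error1 j (2 * N + 1) = error1 (j + 1) N + (INR (Nat.b2n (Z.eqb j 1)) - dens1 j).
Proof.
  rewrite <- error1_double. unfold error1.
  rewrite count_diff_1_double_succ, Z.eqb_sym, plus_INR, (plus_INR (2 * N)). simpl (INR 1). ring.
Qed.

Definition bound1 (j : Z) : R := if Z.leb j 1 then 2 - 2 * dens1 j else 0.

Lemma bound1_nonneg j : 0 <= bound1 j.
Proof. unfold bound1. pose proof (dens1_bounds j). destruct (Z.leb j 1); lra. Qed.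

(* The weight [bound1] absorbs one new error term [1_{j=1} - dens1 j] per halving of N. *)
Lemma bound1_step j : Rabs (INR (Nat.b2n (Z.eqb j 1)) - dens1 j) + bound1 (j + 1) <= bound1 j.
Proof.
  pose proof (dens1_succ j) as Hsucc. pose proof (dens1_bounds j).
  unfold bound1. destruct (Z.eqb_spec j 1) as [Hj|Hj].
  - subst j. unfold dens1. simpl. rewrite Rabs_right; lra.
  - simpl INR in *. rewrite Rminus_0_r in Hsucc.
    rewrite Rabs_minus_sym, Rminus_0_r, Rabs_right by lra.
    destruct (Z.leb_spec (j + 1) 1), (Z.leb_spec j 1); try lia; try lra.
    unfold dens1. destruct (Z.leb_spec j 1); [lia|]. lra.
Qed.

Lemma error1_bound N : forall j, Rabs (error1 j N) <= bound1 j.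
Proof.
  induction N as [N IH] using lt_wf_ind. intros j.
  pose proof (bound1_step j) as Hstep. pose proof (Rabs_pos (INR (Nat.b2n (Z.eqb j 1)) - dens1 j)).
  destruct N as [|N'].
  { replace (error1 j 0) with 0 by (unfold error1; simpl; ring). rewrite Rabs_R0. apply bound1_nonneg. }
  rewrite (Nat.div2_odd (S N')). set (M := Nat.div2 (S N')).
  assert (HM : Rabs (error1 (j + 1) M) <= bound1 (j + 1)) by (apply IH, Nat.lt_div2; lia).
  destruct (Nat.odd (S N')); simpl Nat.b2n.
  - rewrite error1_double_succ. eapply Rle_trans; [apply Rabs_triang|]. lra.
  - rewrite Nat.add_0_r, error1_double. lra.
Qed.

Definition density_approx (t : nat) : Prop :=
  exists E, forall j N, Rabs (INR (count_diff j t N) - INR N * density t j) <= E.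

Lemma density_approx_0 : density_approx 0.
Proof.
  exists 0. intros j N. rewrite density_0, count_diff_shift_0. unfold dens0.
  replace (INR (if Z.eqb j 0 then N else 0%nat) - INR N * (if Z.eqb j 0 then 1 else 0)) with 0
    by (destruct (Z.eqb j 0); simpl; ring).
  rewrite Rabs_R0. lra.
Qed.

Lemma density_approx_1 : density_approx 1.
Proof.
  exists 2. intros j N. rewrite density_1. eapply Rle_trans; [apply (error1_bound N j)|].
  unfold bound1. pose proof (dens1_bounds j). destruct (Z.leb j 1); lra.
Qed.

Lemma density_approx_double t : density_approx t -> density_approx (2 * t).
Proof.
  intros [E HE]. exists (2 * E + 1 + 1). intros j N. rewrite density_double.
  assert (Hp : Rabs (density t j) <= 1)
    by (pose proof (density_bounds t j); rewrite Rabs_right; lra).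
  enough (Heven : forall M,
            Rabs (INR (count_diff j (2 * t) (2 * M)) - INR (2 * M) * density t j) <= 2 * E).
  { pose proof (approx_from_even _ _ _ (count_diff_step j (2 * t)) Heven N). lra. }
  intros M. rewrite count_diff_shift_double, !INR_double.
  replace (2 * INR (count_diff j t M) - 2 * INR M * density t j)
    with (2 * (INR (count_diff j t M) - INR M * density t j)) by ring.
  rewrite Rabs_mult, Rabs_right by lra. specialize (HE j M). lra.
Qed.

Lemma density_approx_double_succ t :
  density_approx t -> density_approx (S t) -> density_approx (2 * t + 1).
Proof.
  intros [E1 HE1] [E2 HE2]. exists (E1 + E2 + 1 + 1). intros j N. rewrite density_double_succ.
  set (p := shift_mix (density t) (density (S t)) j).
  assert (Hp : Rabs p <= 1).
  { pose proof (density_bounds t (j - 1)). pose proof (density_bounds (S t) (j + 1)).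
    unfold p, shift_mix. rewrite Rabs_right; lra. }
  enough (Heven : forall M, Rabs (INR (count_diff j (2 * t + 1) (2 * M)) - INR (2 * M) * p) <= E1 + E2).
  { pose proof (approx_from_even _ _ _ (count_diff_step j (2 * t + 1)) Heven N). lra. }
  intros M. rewrite count_diff_shift_double_succ, plus_INR, INR_double.
  unfold p, shift_mix.
  replace (INR (count_diff (j - 1) t M) + INR (count_diff (j + 1) (S t) M)
           - 2 * INR M * ((density t (j - 1) + density (S t) (j + 1)) / 2))
    with ((INR (count_diff (j - 1) t M) - INR M * density t (j - 1))
          + (INR (count_diff (j + 1) (S t) M) - INR M * density (S t) (j + 1))) by field.
  eapply Rle_trans; [apply Rabs_triang|].
  specialize (HE1 (j - 1)%Z M). specialize (HE2 (j + 1)%Z M). lra.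
Qed.

Lemma density_approx_all t : density_approx t.
Proof.
  induction t using nat_binary_ind.
  - exact density_approx_0.
  - exact density_approx_1.
  - now apply density_approx_double.
  - now apply density_approx_double_succ.
Qed.

Lemma is_lim_seq_ratio_bounded_error (c : nat -> R) (p E : R) :
  (forall N, Rabs (c N - INR N * p) <= E) -> is_lim_seq (fun N => c N / INR N) p.
Proof.
  intros HE.
  assert (Hlim : forall sign, is_lim_seq (fun N => p + sign * E / INR N) p).
  { intros sign. replace (Finite p) with (Finite (p + sign * E * 0)) by (f_equal; ring).
    apply is_lim_seq_plus'; [apply is_lim_seq_const|].
    unfold Rdiv. apply (is_lim_seq_scal_l (fun N => / INR N) (sign * E) 0).
    replace (Finite 0) with (Rbar_inv p_infty) by reflexivity.
    apply is_lim_seq_inv; [apply is_lim_seq_INR|discriminate]. }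
  refine (is_lim_seq_le_le_loc _ _ _ p _ (Hlim (-1)) (Hlim 1)).
  exists 1%nat. intros N HN. assert (HNp : 0 < INR N) by (apply lt_0_INR; lia).
  specialize (HE N). apply Rabs_le_between in HE.
  replace (c N / INR N) with (p + (c N - INR N * p) / INR N) by (field; lra).
  unfold Rdiv. split; apply Rplus_le_compat_l; apply Rmult_le_compat_r;
    (left; apply Rinv_0_lt_compat; lra) || lra.
Qed.

Lemma delta_density j t : delta j t = density t j.
Proof.
  destruct (density_approx_all t) as [E HE]. unfold delta.
  rewrite (is_lim_seq_unique _ (density t j)); [reflexivity|].
  apply (is_lim_seq_ratio_bounded_error _ _ E). intros N. apply HE.
Qed.

(** * Jets of order 5 *)

(* Truncated power series at 0: the field [jc k] is the coefficient of x^k. *)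
Record jet := mkJ { jc0 : R; jc1 : R; jc2 : R; jc3 : R; jc4 : R; jc5 : R }.

Definition jconst (r : R) : jet := mkJ r 0 0 0 0 0.
Definition jone : jet := jconst 1.
Definition jadd (a b : jet) : jet :=
  mkJ (jc0 a + jc0 b) (jc1 a + jc1 b) (jc2 a + jc2 b) (jc3 a + jc3 b) (jc4 a + jc4 b) (jc5 a + jc5 b).
Definition jscal (r : R) (a : jet) : jet :=
  mkJ (r * jc0 a) (r * jc1 a) (r * jc2 a) (r * jc3 a) (r * jc4 a) (r * jc5 a).
Definition jsub (a b : jet) : jet := jadd a (jscal (-1) b).
Definition jmul (a b : jet) : jet := mkJ
  (jc0 a * jc0 b)
  (jc0 a * jc1 b + jc1 a * jc0 b)
  (jc0 a * jc2 b + jc1 a * jc1 b + jc2 a * jc0 b)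
  (jc0 a * jc3 b + jc1 a * jc2 b + jc2 a * jc1 b + jc3 a * jc0 b)
  (jc0 a * jc4 b + jc1 a * jc3 b + jc2 a * jc2 b + jc3 a * jc1 b + jc4 a * jc0 b)
  (jc0 a * jc5 b + jc1 a * jc4 b + jc2 a * jc3 b + jc3 a * jc2 b + jc4 a * jc1 b + jc5 a * jc0 b).

Fixpoint jpow (a : jet) (n : nat) : jet :=
  match n with O => jone | S n => jmul (jpow a n) a end.

Fixpoint jpoly (c : nat -> R) (u : jet) (n : nat) : jet :=
  match n with
  | O => jconst (c O)
  | S n => jadd (jpoly c u n) (jscal (c (S n)) (jpow u (S n)))
  end.

Definition jinv (a : jet) : jet := jpoly (fun k => (-1) ^ k) (jsub a jone) 5.

Definition jlog (a : jet) : jet :=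
  jpoly (fun k => match k with O => 0 | S k => (-1) ^ k / INR (S k) end) (jsub a jone) 5.

Lemma jet_ext a b :
  jc0 a = jc0 b -> jc1 a = jc1 b -> jc2 a = jc2 b -> jc3 a = jc3 b -> jc4 a = jc4 b -> jc5 a = jc5 b ->
  a = b.
Proof. destruct a, b; simpl; intros; subst; reflexivity. Qed.

Lemma jinv_explicit a : jc0 a = 1 -> jinv a =
  let '(mkJ _ u1 u2 u3 u4 u5) := a in
  mkJ 1 (- u1) (- u2 + u1 ^ 2) (- u3 + 2 * u1 * u2 - u1 ^ 3)
      (- u4 + 2 * u1 * u3 + u2 ^ 2 - 3 * u1 ^ 2 * u2 + u1 ^ 4)
      (- u5 + 2 * u1 * u4 + 2 * u2 * u3 - 3 * u1 ^ 2 * u3 - 3 * u1 * u2 ^ 2 + 4 * u1 ^ 3 * u2 - u1 ^ 5).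
Proof.
  destruct a as [a0 u1 u2 u3 u4 u5]. simpl. intros ->.
  apply jet_ext; cbn; ring.
Qed.

Lemma jlog_explicit a : jc0 a = 1 -> jlog a =
  let '(mkJ _ u1 u2 u3 u4 u5) := a in
  mkJ 0 u1 (u2 - u1 ^ 2 / 2) (u3 - u1 * u2 + u1 ^ 3 / 3)
      (u4 - u1 * u3 - u2 ^ 2 / 2 + u1 ^ 2 * u2 - u1 ^ 4 / 4)
      (u5 - u1 * u4 - u2 * u3 + u1 ^ 2 * u3 + u1 * u2 ^ 2 - u1 ^ 3 * u2 + u1 ^ 5 / 5).
Proof.
  destruct a as [a0 u1 u2 u3 u4 u5]. simpl. intros ->.
  apply jet_ext; cbn; field.
Qed.

Lemma jmul_comm a b : jmul a b = jmul b a.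
Proof. apply jet_ext; simpl; ring. Qed.

Lemma jmul_assoc a b c : jmul a (jmul b c) = jmul (jmul a b) c.
Proof. apply jet_ext; simpl; ring. Qed.

Lemma jmul_1r a : jmul a jone = a.
Proof. apply jet_ext; simpl; ring. Qed.

Lemma jmul_c0 a b : jc0 (jmul a b) = jc0 a * jc0 b.
Proof. reflexivity. Qed.

Lemma jlog_1 : jlog jone = jconst 0.
Proof. rewrite jlog_explicit by reflexivity. apply jet_ext; simpl; field. Qed.

Lemma jlog_mul a b : jc0 a = 1 -> jc0 b = 1 -> jlog (jmul a b) = jadd (jlog a) (jlog b).
Proof.
  intros Ha Hb. rewrite !jlog_explicit; auto; [|rewrite jmul_c0, Ha, Hb; ring].
  destruct a, b; simpl in *; subst. apply jet_ext; simpl; field.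
Qed.

Lemma jinv_c0 a : jc0 a = 1 -> jc0 (jinv a) = 1.
Proof. intros H. rewrite jinv_explicit by exact H. destruct a; reflexivity. Qed.

Lemma jmul_jinv a : jc0 a = 1 -> jmul a (jinv a) = jone.
Proof.
  intros H. rewrite jinv_explicit by exact H. destruct a; simpl in *; subst.
  apply jet_ext; simpl; ring.
Qed.

Lemma jinv_unique a x : jc0 a = 1 -> jmul x a = jone -> x = jinv a.
Proof.
  intros Ha Hx. rewrite <- (jmul_1r x), <- (jmul_jinv a Ha), jmul_assoc, Hx.
  rewrite jmul_comm. apply jmul_1r.
Qed.

Lemma jinv_mul a b : jc0 a = 1 -> jc0 b = 1 -> jinv (jmul a b) = jmul (jinv a) (jinv b).
Proof.
  intros Ha Hb. symmetry. apply jinv_unique; [rewrite jmul_c0, Ha, Hb; ring|].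
  transitivity (jmul (jmul a (jinv a)) (jmul b (jinv b))).
  - generalize (jinv a) (jinv b). intros x y. apply jet_ext; simpl; ring.
  - rewrite !jmul_jinv by assumption. apply jmul_1r.
Qed.

Lemma jmul_cancel_jinv a b x : jc0 a = 1 -> jmul (jmul b a) (jmul (jinv a) x) = jmul b x.
Proof.
  intros Ha. rewrite <- jmul_assoc, (jmul_assoc a), jmul_jinv by exact Ha.
  rewrite (jmul_comm jone), jmul_1r. reflexivity.
Qed.

Definition jabs (a : jet) : R :=
  Rabs (jc0 a) + Rabs (jc1 a) + Rabs (jc2 a) + Rabs (jc3 a) + Rabs (jc4 a) + Rabs (jc5 a).

Definition jdilate (w : R) (a : jet) : jet :=
  mkJ (jc0 a) (jc1 a * w) (jc2 a * w ^ 2) (jc3 a * w ^ 3) (jc4 a * w ^ 4) (jc5 a * w ^ 5).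

(* The weight 1/100 makes |exp(+-x)| close to 1, which the contraction estimates below need. *)
Definition jnorm (a : jet) : R := jabs (jdilate (/ 100) a).

Lemma convolution_le_product a0 a1 a2 a3 a4 a5 b0 b1 b2 b3 b4 b5 :
  0 <= a0 -> 0 <= a1 -> 0 <= a2 -> 0 <= a3 -> 0 <= a4 -> 0 <= a5 ->
  0 <= b0 -> 0 <= b1 -> 0 <= b2 -> 0 <= b3 -> 0 <= b4 -> 0 <= b5 ->
  a0 * b0 + (a0 * b1 + a1 * b0) + (a0 * b2 + a1 * b1 + a2 * b0)
  + (a0 * b3 + a1 * b2 + a2 * b1 + a3 * b0)
  + (a0 * b4 + a1 * b3 + a2 * b2 + a3 * b1 + a4 * b0)
  + (a0 * b5 + a1 * b4 + a2 * b3 + a3 * b2 + a4 * b1 + a5 * b0)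
  <= (a0 + a1 + a2 + a3 + a4 + a5) * (b0 + b1 + b2 + b3 + b4 + b5).
Proof.
  intros.
  set (high := a1 * b5 + a2 * (b4 + b5) + a3 * (b3 + b4 + b5) + a4 * (b2 + b3 + b4 + b5)
               + a5 * (b1 + b2 + b3 + b4 + b5)).
  assert (0 <= high)
    by (unfold high; repeat (apply Rplus_le_le_0_compat || apply Rmult_le_pos); assumption).
  enough (Hexp : (a0 + a1 + a2 + a3 + a4 + a5) * (b0 + b1 + b2 + b3 + b4 + b5)
    = a0 * b0 + (a0 * b1 + a1 * b0) + (a0 * b2 + a1 * b1 + a2 * b0)
      + (a0 * b3 + a1 * b2 + a2 * b1 + a3 * b0)
      + (a0 * b4 + a1 * b3 + a2 * b2 + a3 * b1 + a4 * b0)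
      + (a0 * b5 + a1 * b4 + a2 * b3 + a3 * b2 + a4 * b1 + a5 * b0) + high) by lra.
  unfold high. ring.
Qed.

Lemma Rabs_add_le x y X Y : Rabs x <= X -> Rabs y <= Y -> Rabs (x + y) <= X + Y.
Proof. intros. eapply Rle_trans; [apply Rabs_triang|lra]. Qed.

Lemma jabs_mul a b : jabs (jmul a b) <= jabs a * jabs b.
Proof.
  destruct a as [a0 a1 a2 a3 a4 a5], b as [b0 b1 b2 b3 b4 b5]. unfold jabs, jmul; simpl.
  eapply Rle_trans; [|apply convolution_le_product; apply Rabs_pos].
  repeat apply Rplus_le_compat; repeat apply Rabs_add_le; rewrite Rabs_mult; apply Rle_refl.
Qed.

Lemma jdilate_mul w a b : jdilate w (jmul a b) = jmul (jdilate w a) (jdilate w b).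
Proof. apply jet_ext; simpl; ring. Qed.

Lemma jdilate_add w a b : jdilate w (jadd a b) = jadd (jdilate w a) (jdilate w b).
Proof. apply jet_ext; simpl; ring. Qed.

Lemma jdilate_scal w r a : jdilate w (jscal r a) = jscal r (jdilate w a).
Proof. apply jet_ext; simpl; ring. Qed.

Lemma jnorm_nonneg a : 0 <= jnorm a.
Proof.
  unfold jnorm, jabs.
  repeat apply Rplus_le_le_0_compat; apply Rabs_pos.
Qed.

Lemma jnorm_mul a b : jnorm (jmul a b) <= jnorm a * jnorm b.
Proof. unfold jnorm. rewrite jdilate_mul. apply jabs_mul. Qed.

Lemma jnorm_add a b : jnorm (jadd a b) <= jnorm a + jnorm b.
Proof.
  unfold jnorm. rewrite jdilate_add. destruct (jdilate (/ 100) a), (jdilate (/ 100) b).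
  unfold jabs, jadd; simpl.
  repeat match goal with |- context [Rabs (?x + ?y)] =>
    pose proof (Rabs_triang x y); set (Rabs (x + y)) in * end.
  lra.
Qed.

Lemma jnorm_scal r a : jnorm (jscal r a) = Rabs r * jnorm a.
Proof.
  unfold jnorm. rewrite jdilate_scal. destruct (jdilate (/ 100) a).
  unfold jabs, jscal; simpl. rewrite !Rabs_mult. ring.
Qed.

Lemma jnorm_sub_triangle a b c : jnorm (jsub a c) <= jnorm (jsub a b) + jnorm (jsub b c).
Proof.
  replace (jsub a c) with (jadd (jsub a b) (jsub b c)) by (apply jet_ext; simpl; ring).
  apply jnorm_add.
Qed.

Lemma jnorm_sub_sym a b : jnorm (jsub a b) = jnorm (jsub b a).
Proof.
  replace (jsub a b) with (jscal (-1) (jsub b a)) by (apply jet_ext; simpl; ring).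
  rewrite jnorm_scal, Rabs_m1. ring.
Qed.

Lemma jnorm_const r : jnorm (jconst r) = Rabs r.
Proof. unfold jnorm, jabs, jdilate; simpl. rewrite !Rmult_0_l, Rabs_R0. ring. Qed.

Lemma jnorm_pow u n : jnorm (jpow u n) <= jnorm u ^ n.
Proof.
  induction n as [|n IH]; simpl.
  - unfold jone. rewrite jnorm_const, Rabs_R1. lra.
  - eapply Rle_trans; [apply jnorm_mul|].
    rewrite (Rmult_comm (jnorm u)). apply Rmult_le_compat_r; [apply jnorm_nonneg|exact IH].
Qed.

(* The geometric tail [2 |u| (1/2)^n] makes the induction go through. *)
Lemma jnorm_jpoly_tail c u n :
  (forall k, Rabs (c (S k)) <= 1) -> jnorm u <= 1 / 2 ->
  jnorm (jpoly c u n) + 2 * jnorm u * (/ 2) ^ n <= Rabs (c O) + 2 * jnorm u.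
Proof.
  intros Hc Hu. pose proof (jnorm_nonneg u) as Hu0.
  induction n as [|n IH].
  - simpl. rewrite jnorm_const. lra.
  - assert (Hpow : jnorm u ^ S n <= jnorm u * (/ 2) ^ n).
    { simpl. apply Rmult_le_compat_l; [exact Hu0|]. apply pow_incr. lra. }
    assert (Hterm : jnorm (jscal (c (S n)) (jpow u (S n))) <= jnorm u ^ S n).
    { rewrite jnorm_scal. rewrite <- (Rmult_1_l (jnorm u ^ S n)).
      apply Rmult_le_compat; [apply Rabs_pos|apply jnorm_nonneg|apply Hc|apply jnorm_pow]. }
    change (jpoly c u (S n)) with (jadd (jpoly c u n) (jscal (c (S n)) (jpow u (S n)))).
    pose proof (jnorm_add (jpoly c u n) (jscal (c (S n)) (jpow u (S n)))).
    replace (2 * jnorm u * (/ 2) ^ S n) with (jnorm u * (/ 2) ^ n) by (simpl; field).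
    rewrite Rmult_assoc in IH. lra.
Qed.

Lemma jnorm_jpoly c u n :
  (forall k, Rabs (c (S k)) <= 1) -> jnorm u <= 1 / 2 ->
  jnorm (jpoly c u n) <= Rabs (c O) + 2 * jnorm u.
Proof.
  intros Hc Hu. pose proof (jnorm_jpoly_tail c u n Hc Hu).
  assert (0 <= 2 * jnorm u * (/ 2) ^ n).
  { apply Rmult_le_pos; [pose proof (jnorm_nonneg u); lra|apply pow_le; lra]. }
  lra.
Qed.

Lemma jnorm_jlog a : jnorm (jsub a jone) <= 1 / 2 -> jnorm (jlog a) <= 2 * jnorm (jsub a jone).
Proof.
  intros Hu. unfold jlog. eapply Rle_trans; [apply jnorm_jpoly; [|exact Hu]|].
  - intros k. assert (Hk : 1 <= INR (S k)) by (rewrite S_INR; pose proof (pos_INR k); lra).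
    unfold Rdiv. rewrite Rabs_mult, pow_1_abs, Rmult_1_l, Rabs_inv, Rabs_right by lra.
    rewrite <- Rinv_1. apply Rinv_le_contravar; lra.
  - simpl. rewrite Rabs_R0. lra.
Qed.

Lemma jnorm_jinv a : jnorm (jsub a jone) <= 1 / 2 -> jnorm (jinv a) <= 1 + 2 * jnorm (jsub a jone).
Proof.
  intros Hu. unfold jinv. eapply Rle_trans; [apply jnorm_jpoly; [|exact Hu]|].
  - intros k. rewrite pow_1_abs. lra.
  - simpl. rewrite Rabs_R1. lra.
Qed.

(** * The jets of phi_t and of the ratios phi_(t+1) / phi_t *)

Definition jexp (c : R) : jet := mkJ 1 c (c ^ 2 / 2) (c ^ 3 / 6) (c ^ 4 / 24) (c ^ 5 / 120).

Definition jmix (a b : jet) : jet := jscal (/ 2) (jadd (jmul (jexp 1) a) (jmul (jexp (-1)) b)).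

Definition rho0 : jet := jmul (jexp 1) (jinv (jsub (jconst 2) (jexp (-1)))).

(* The unique r with [step_even r = jone]. *)
Definition rho_star : jet := jsub (jscal 2 (jexp 1)) (jexp 2).

Definition step_even (r : jet) : jet := jmix jone r.

Definition step_odd (r : jet) : jet := jmul r (jinv (step_even r)).

Lemma rho0_explicit : rho0 = mkJ 1 0 1 (-1) (19 / 12) (-9 / 4).
Proof.
  unfold rho0. rewrite jinv_explicit by (simpl; field).
  apply jet_ext; simpl; field.
Qed.

Lemma rho_star_explicit : rho_star = mkJ 1 0 (-1) (-1) (-7 / 12) (-1 / 4).
Proof. apply jet_ext; simpl; field. Qed.

Lemma jmix_jone_rho0 : jmix jone rho0 = rho0.
Proof. rewrite rho0_explicit. apply jet_ext; simpl; field. Qed.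

Lemma jmix_c0 a b : jc0 a = 1 -> jc0 b = 1 -> jc0 (jmix a b) = 1.
Proof. intros Ha Hb. simpl. rewrite Ha, Hb. field. Qed.

Lemma jmix_factor a r : jmix a (jmul r a) = jmul a (step_even r).
Proof. apply jet_ext; simpl; ring. Qed.

Lemma step_even_c0 r : jc0 r = 1 -> jc0 (step_even r) = 1.
Proof. intros H. apply jmix_c0; [reflexivity|exact H]. Qed.

Lemma step_even_sub_jone r : jsub (step_even r) jone = jscal (/ 2) (jmul (jexp (-1)) (jsub r rho_star)).
Proof. apply jet_ext; simpl; field. Qed.

Lemma step_even_sub_rho0 r : jsub (step_even r) rho0 = jscal (/ 2) (jmul (jexp (-1)) (jsub r rho0)).
Proof. rewrite rho0_explicit. apply jet_ext; simpl; field. Qed.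

Lemma step_odd_sub_rho_star r : jc0 r = 1 ->
  jsub (step_odd r) rho_star = jmul (jscal (/ 2) (jmul (jexp 1) (jsub r rho_star))) (jinv (step_even r)).
Proof.
  intros Hr. unfold step_odd.
  assert (Hlin : jscal (/ 2) (jmul (jexp 1) (jsub r rho_star)) = jsub r (jmul rho_star (step_even r)))
    by (apply jet_ext; simpl; field).
  rewrite Hlin.
  transitivity (jsub (jmul r (jinv (step_even r)))
                     (jmul rho_star (jmul (step_even r) (jinv (step_even r))))).
  - rewrite jmul_jinv, jmul_1r by (apply step_even_c0, Hr). reflexivity.
  - generalize (jinv (step_even r)). intros i. apply jet_ext; simpl; ring.
Qed.

Lemma jnorm_jexp_unit c : Rabs c = 1 -> jnorm (jexp c) <= 102 / 100.
Proof.
  intros Hc. unfold jnorm, jabs, jdilate, jexp; simpl.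
  unfold Rdiv. rewrite !Rabs_mult, Hc, !Rabs_inv, Rabs_R1, !Rabs_right by lra.
  lra.
Qed.

Lemma jnorm_rho0_sub_rho_star : jnorm (jsub rho0 rho_star) <= 1 / 4000.
Proof.
  rewrite rho0_explicit, rho_star_explicit. unfold jnorm, jabs, jdilate, jsub, jadd, jscal; simpl.
  repeat match goal with |- context [Rabs ?x] =>
    first [rewrite (Rabs_right x) by lra | rewrite (Rabs_left x) by lra] end.
  lra.
Qed.

Lemma jnorm_half_jexp_mul c a :
  Rabs c = 1 -> jnorm (jscal (/ 2) (jmul (jexp c) a)) <= 51 / 100 * jnorm a.
Proof.
  intros Hc. rewrite jnorm_scal, Rabs_right by lra.
  pose proof (jnorm_mul (jexp c) a). pose proof (jnorm_jexp_unit c Hc).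
  pose proof (jnorm_nonneg a). pose proof (jnorm_nonneg (jexp c)).
  assert (jnorm (jexp c) * jnorm a <= 102 / 100 * jnorm a) by (apply Rmult_le_compat_r; lra).
  lra.
Qed.

Lemma step_even_near_rho_star r :
  jnorm (jsub r rho_star) <= 1 / 100 -> jnorm (jsub (step_even r) rho_star) <= 1 / 100.
Proof.
  intros Hr. pose proof jnorm_rho0_sub_rho_star.
  assert (Hr0 : jnorm (jsub r rho0) <= 1 / 100 + 1 / 4000).
  { pose proof (jnorm_sub_triangle r rho_star rho0). rewrite (jnorm_sub_sym rho_star) in *. lra. }
  pose proof (jnorm_half_jexp_mul (-1) (jsub r rho0) Rabs_m1).
  eapply Rle_trans; [apply (jnorm_sub_triangle _ rho0)|].
  rewrite step_even_sub_rho0. lra.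
Qed.

Lemma step_even_sub_jone_le r :
  jnorm (jsub (step_even r) jone) <= 51 / 100 * jnorm (jsub r rho_star).
Proof. rewrite step_even_sub_jone. exact (jnorm_half_jexp_mul (-1) _ Rabs_m1). Qed.

Lemma jnorm_jlog_step_even r :
  jnorm (jsub r rho_star) <= 1 / 100 ->
  jnorm (jlog (step_even r)) <= 102 / 100 * jnorm (jsub r rho_star).
Proof.
  intros Hr. pose proof (step_even_sub_jone_le r).
  eapply Rle_trans; [apply jnorm_jlog; lra|]. lra.
Qed.

Lemma step_odd_contraction r :
  jc0 r = 1 -> jnorm (jsub r rho_star) <= 1 / 100 ->
  jnorm (jsub (step_odd r) rho_star) <= 52 / 100 * jnorm (jsub r rho_star).
Proof.
  intros Hc Hr. set (d := jnorm (jsub r rho_star)) in *.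
  pose proof (jnorm_nonneg (jsub r rho_star)) as Hd. fold d in Hd.
  pose proof (step_even_sub_jone_le r) as Hu. fold d in Hu.
  assert (Hinv : jnorm (jinv (step_even r)) <= 1011 / 1000)
    by (eapply Rle_trans; [apply jnorm_jinv|]; lra).
  pose proof (jnorm_half_jexp_mul 1 (jsub r rho_star) Rabs_R1) as Hlin. fold d in Hlin.
  rewrite step_odd_sub_rho_star by exact Hc.
  eapply Rle_trans; [apply jnorm_mul|].
  eapply Rle_trans;
    [apply Rmult_le_compat; [apply jnorm_nonneg|apply jnorm_nonneg|exact Hlin|exact Hinv]|].
  lra.
Qed.

Definition jphi (t : nat) : jet := brec _ jone rho0 jmix t.

Definition jrho (t : nat) : jet := jmul (jphi (S t)) (jinv (jphi t)).

Lemma jphi_0 : jphi 0 = jone.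
Proof. reflexivity. Qed.

Lemma jphi_1 : jphi 1 = rho0.
Proof. reflexivity. Qed.

Lemma jphi_double t : jphi (2 * t) = jphi t.
Proof. apply brec_double, jmix_jone_rho0. Qed.

Lemma jphi_double_succ_mix t : jphi (2 * t + 1) = jmix (jphi t) (jphi (S t)).
Proof. apply brec_double_succ, jmix_jone_rho0. Qed.

Lemma jphi_c0 t : jc0 (jphi t) = 1.
Proof.
  induction t using nat_binary_ind.
  - reflexivity.
  - rewrite jphi_1, rho0_explicit. reflexivity.
  - now rewrite jphi_double.
  - rewrite jphi_double_succ_mix. now apply jmix_c0.
Qed.

Lemma jphi_succ t : jphi (S t) = jmul (jrho t) (jphi t).
Proof.
  unfold jrho. rewrite <- jmul_assoc, (jmul_comm (jinv _)), jmul_jinv by apply jphi_c0.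
  symmetry. apply jmul_1r.
Qed.

Lemma jphi_double_succ t : jphi (2 * t + 1) = jmul (jphi t) (step_even (jrho t)).
Proof. rewrite jphi_double_succ_mix, jphi_succ. apply jmix_factor. Qed.

Lemma jrho_c0 t : jc0 (jrho t) = 1.
Proof. unfold jrho. rewrite jmul_c0, jinv_c0, !jphi_c0 by apply jphi_c0. ring. Qed.

Lemma jrho_0 : jrho 0 = rho0.
Proof.
  unfold jrho. rewrite jphi_0, jphi_1.
  replace (jinv jone) with jone by (apply jinv_unique; [reflexivity|apply jmul_1r]).
  apply jmul_1r.
Qed.

Lemma jrho_double t : jrho (2 * t) = step_even (jrho t).
Proof.
  unfold jrho at 1. rewrite <- Nat.add_1_r, jphi_double_succ, jphi_double.
  rewrite (jmul_comm (jphi t)), <- jmul_assoc, jmul_jinv by apply jphi_c0. apply jmul_1r.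
Qed.

Lemma jrho_double_succ t : jrho (2 * t + 1) = step_odd (jrho t).
Proof.
  unfold jrho at 1. replace (S (2 * t + 1)) with (2 * S t)%nat by lia.
  rewrite jphi_double, jphi_double_succ, jphi_succ.
  rewrite jinv_mul by (apply jphi_c0 || apply step_even_c0, jrho_c0).
  apply jmul_cancel_jinv, jphi_c0.
Qed.

(* An odd t ends in a block of 1s that t -> 2t+1 extends without increasing [blocks t]; the term
   3 |jrho t - rho_star| prepays the geometrically decreasing increments of [jlog (jphi t)]
   along such an extension. *)
Definition block_invariant (t : nat) : Prop :=
  jnorm (jsub (jrho t) rho_star) <= 1 / 100 /\
  jnorm (jlog (jphi t)) + (if Nat.odd t then 3 * jnorm (jsub (jrho t) rho_star) else 0)
    <= INR (blocks t).

Lemma block_invariant_0 : block_invariant 0.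
Proof.
  split.
  - rewrite jrho_0. pose proof jnorm_rho0_sub_rho_star. lra.
  - rewrite jphi_0, jlog_1, jnorm_const, Rabs_R0. simpl. lra.
Qed.

Lemma block_invariant_double t : block_invariant t -> block_invariant (2 * t).
Proof.
  intros [Hr Hlog]. split.
  - rewrite jrho_double. now apply step_even_near_rho_star.
  - rewrite Nat.odd_even, jphi_double, blocks_double.
    pose proof (jnorm_nonneg (jsub (jrho t) rho_star)). destruct (Nat.odd t); lra.
Qed.

Lemma block_invariant_double_succ t : block_invariant t -> block_invariant (2 * t + 1).
Proof.
  intros [Hr Hlog]. set (d := jnorm (jsub (jrho t) rho_star)) in *.
  pose proof (jnorm_nonneg (jsub (jrho t) rho_star)) as Hd. fold d in Hd.
  pose proof (step_odd_contraction (jrho t) (jrho_c0 t) Hr) as Hcontr. fold d in Hcontr.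
  pose proof (jnorm_jlog_step_even (jrho t) Hr) as Hstep. fold d in Hstep.
  unfold block_invariant. rewrite jrho_double_succ. split; [lra|].
  rewrite Nat.odd_odd, jphi_double_succ, blocks_double_succ, plus_INR.
  rewrite jlog_mul by (apply jphi_c0 || apply step_even_c0, jrho_c0).
  pose proof (jnorm_add (jlog (jphi t)) (jlog (step_even (jrho t)))).
  destruct (Nat.odd t); simpl INR; lra.
Qed.

Lemma jnorm_jlog_jphi t : jnorm (jlog (jphi t)) <= INR (blocks t).
Proof.
  assert (Hinv : block_invariant t).
  { induction t using nat_binary_ind.
    - exact block_invariant_0.
    - exact (block_invariant_double_succ 0 block_invariant_0).
    - now apply block_invariant_double.
    - now apply block_invariant_double_succ. }
  destruct Hinv as [_ H]. pose proof (jnorm_nonneg (jsub (jrho t) rho_star)).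
  destruct (Nat.odd t); lra.
Qed.

(** * Derivative towers and the moment generating function *)

Definition near0 (x : R) : Prop := Rabs x < 1 / 2.

Lemma near0_locally x : near0 x -> locally x near0.
Proof.
  intros Hx. unfold near0 in *.
  assert (He : 0 < 1 / 2 - Rabs x) by lra.
  exists (mkposreal _ He). intros y Hy.
  cbn in Hy. unfold AbsRing_ball, abs, minus, plus, opp in Hy; cbn in Hy.
  pose proof (Rabs_triang_inv y x). unfold Rminus in *. lra.
Qed.

Definition derivative_tower (f : nat -> R -> R) : Prop :=
  forall k x, (k < 5)%nat -> near0 x -> is_derive (f k) x (f (S k) x).

Lemma Derive_n_tower f k x :
  derivative_tower f -> (k <= 5)%nat -> near0 x -> Derive_n (f 0%nat) k x = f k x.
Proof.
  intros Hf. revert x. induction k as [|k IH]; intros x Hk Hx; [reflexivity|].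
  simpl. rewrite (Derive_ext_loc _ (f k)).
  - apply is_derive_unique, Hf; [lia|exact Hx].
  - apply (filter_imp near0); [|exact (near0_locally x Hx)]. intros y Hy. apply IH; [lia|exact Hy].
Qed.

Lemma tower_ex_derive f k x :
  derivative_tower f -> (k < 5)%nat -> near0 x -> ex_derive (fun y => f k y) x.
Proof. intros Hf Hk Hx. exists (f (S k) x). now apply Hf. Qed.

Lemma tower_Derive f k x :
  derivative_tower f -> (k < 5)%nat -> near0 x -> Derive (fun y => f k y) x = f (S k) x.
Proof. intros Hf Hk Hx. apply is_derive_unique. now apply Hf. Qed.

Ltac tower_side_conditions :=
  repeat (first [ split | exact I | (apply tower_ex_derive; [assumption | lia | assumption]) ]).

Ltac tower_rewrite_Derive :=
  repeat match goal with |- context [Derive (fun y => ?F ?i y) ?x] =>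
    rewrite (tower_Derive F i x) by (first [assumption | lia]) end.

Definition tconst (c : R) : nat -> R -> R := fun k _ => match k with O => c | _ => 0 end.
Definition texp (a : R) : nat -> R -> R := fun k x => a ^ k * exp (a * x).
Definition tadd (f g : nat -> R -> R) : nat -> R -> R := fun k x => f k x + g k x.
Definition tscal (c : R) (f : nat -> R -> R) : nat -> R -> R := fun k x => c * f k x.

Definition tmul (f g : nat -> R -> R) : nat -> R -> R := fun k x =>
  match k with
  | 0%nat => f 0%nat x * g 0%nat x
  | 1%nat => f 1%nat x * g 0%nat x + f 0%nat x * g 1%nat x
  | 2%nat => f 2%nat x * g 0%nat x + 2 * f 1%nat x * g 1%nat x + f 0%nat x * g 2%nat x
  | 3%nat => f 3%nat x * g 0%nat x + 3 * f 2%nat x * g 1%nat x + 3 * f 1%nat x * g 2%nat x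
             + f 0%nat x * g 3%nat x
  | 4%nat => f 4%nat x * g 0%nat x + 4 * f 3%nat x * g 1%nat x + 6 * f 2%nat x * g 2%nat x
             + 4 * f 1%nat x * g 3%nat x + f 0%nat x * g 4%nat x
  | _ => f 5%nat x * g 0%nat x + 5 * f 4%nat x * g 1%nat x + 10 * f 3%nat x * g 2%nat x
         + 10 * f 2%nat x * g 3%nat x + 5 * f 1%nat x * g 4%nat x + f 0%nat x * g 5%nat x
  end.

(* Faa di Bruno's formula: [h i] are the derivatives of the outer function at [g x],
   [g' j] those of the inner function at [x]. *)
Definition faa_di_bruno (h g' : nat -> R) (k : nat) : R :=
  match k with
  | 0%nat => h 0%nat
  | 1%nat => h 1%nat * g' 1%nat
  | 2%nat => h 2%nat * g' 1%nat ^ 2 + h 1%nat * g' 2%nat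
  | 3%nat => h 3%nat * g' 1%nat ^ 3 + 3 * h 2%nat * g' 1%nat * g' 2%nat + h 1%nat * g' 3%nat
  | 4%nat => h 4%nat * g' 1%nat ^ 4 + 6 * h 3%nat * g' 1%nat ^ 2 * g' 2%nat + 3 * h 2%nat * g' 2%nat ^ 2
             + 4 * h 2%nat * g' 1%nat * g' 3%nat + h 1%nat * g' 4%nat
  | _ => h 5%nat * g' 1%nat ^ 5 + 10 * h 4%nat * g' 1%nat ^ 3 * g' 2%nat
         + 15 * h 3%nat * g' 1%nat * g' 2%nat ^ 2 + 10 * h 3%nat * g' 1%nat ^ 2 * g' 3%nat
         + 10 * h 2%nat * g' 2%nat * g' 3%nat + 5 * h 2%nat * g' 1%nat * g' 4%nat + h 1%nat * g' 5%nat
  end.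

Definition tcomp (H : nat -> R -> R) (g : nat -> R -> R) : nat -> R -> R :=
  fun k x => faa_di_bruno (fun i => H i (g 0%nat x)) (fun j => g j x) k.

Definition ln_derivs (k : nat) (y : R) : R :=
  match k with
  | 0%nat => ln y | 1%nat => / y | 2%nat => - / y ^ 2 | 3%nat => 2 / y ^ 3 | 4%nat => - 6 / y ^ 4
  | _ => 24 / y ^ 5
  end.

Definition inv_derivs (k : nat) (y : R) : R :=
  match k with
  | 0%nat => / y | 1%nat => - / y ^ 2 | 2%nat => 2 / y ^ 3 | 3%nat => - 6 / y ^ 4 | 4%nat => 24 / y ^ 5
  | _ => - 120 / y ^ 6
  end.

Lemma tower_const c : derivative_tower (tconst c).
Proof. intros k x Hk Hx. unfold tconst. destruct k; auto_derive; auto. Qed.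

Lemma tower_exp a : derivative_tower (texp a).
Proof. intros k x Hk Hx. unfold texp. auto_derive; auto. simpl. ring. Qed.

Lemma tower_add f g : derivative_tower f -> derivative_tower g -> derivative_tower (tadd f g).
Proof. intros Hf Hg k x Hk Hx. apply (is_derive_plus (f k) (g k)); auto. Qed.

Lemma tower_scal c f : derivative_tower f -> derivative_tower (tscal c f).
Proof. intros Hf k x Hk Hx. apply (is_derive_scal (f k)); auto. Qed.

Lemma tower_mul f g : derivative_tower f -> derivative_tower g -> derivative_tower (tmul f g).
Proof.
  intros Hf Hg k x Hk Hx.
  destruct k as [|[|[|[|[|k]]]]]; try lia; unfold tmul; auto_derive;
    tower_side_conditions; tower_rewrite_Derive; ring.
Qed.

Ltac nonzero := repeat apply Rmult_integral_contrapositive_currified; apply Rgt_not_eq; lra.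

Lemma tower_ln g :
  derivative_tower g -> (forall x, near0 x -> 0 < g 0%nat x) -> derivative_tower (tcomp ln_derivs g).
Proof.
  intros Hg Hp k x Hk Hx. specialize (Hp x Hx).
  destruct k as [|[|[|[|[|k]]]]]; try lia; unfold tcomp, faa_di_bruno, ln_derivs; auto_derive;
    tower_side_conditions; auto; try nonzero; tower_rewrite_Derive; field; lra.
Qed.

Lemma tower_inv g :
  derivative_tower g -> (forall x, near0 x -> 0 < g 0%nat x) -> derivative_tower (tcomp inv_derivs g).
Proof.
  intros Hg Hp k x Hk Hx. specialize (Hp x Hx).
  destruct k as [|[|[|[|[|k]]]]]; try lia; unfold tcomp, faa_di_bruno, inv_derivs; auto_derive;
    tower_side_conditions; auto; try nonzero; tower_rewrite_Derive; field; lra.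
Qed.

Definition tower_jet (f : nat -> R -> R) : jet :=
  mkJ (f 0%nat 0) (f 1%nat 0) (f 2%nat 0 / 2) (f 3%nat 0 / 6) (f 4%nat 0 / 24) (f 5%nat 0 / 120).

Lemma tower_jet_const c : tower_jet (tconst c) = jconst c.
Proof. apply jet_ext; simpl; field. Qed.

Lemma tower_jet_exp a : tower_jet (texp a) = jexp a.
Proof. unfold tower_jet, texp. rewrite Rmult_0_r, exp_0. apply jet_ext; simpl; field. Qed.

Lemma tower_jet_add f g : tower_jet (tadd f g) = jadd (tower_jet f) (tower_jet g).
Proof. unfold tadd. apply jet_ext; simpl; field. Qed.

Lemma tower_jet_scal c f : tower_jet (tscal c f) = jscal c (tower_jet f).
Proof. unfold tscal. apply jet_ext; simpl; field. Qed.

Lemma tower_jet_mul f g : tower_jet (tmul f g) = jmul (tower_jet f) (tower_jet g).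
Proof. unfold tmul. apply jet_ext; simpl; field. Qed.

Lemma tower_jet_inv g : g 0%nat 0 = 1 -> tower_jet (tcomp inv_derivs g) = jinv (tower_jet g).
Proof.
  intros H. rewrite jinv_explicit by exact H.
  unfold tower_jet, tcomp, faa_di_bruno, inv_derivs. rewrite H. apply jet_ext; simpl; field.
Qed.

Lemma tower_jet_ln g : g 0%nat 0 = 1 -> tower_jet (tcomp ln_derivs g) = jlog (tower_jet g).
Proof.
  intros H. rewrite jlog_explicit by exact H.
  unfold tower_jet, tcomp, faa_di_bruno, ln_derivs. rewrite H, ln_1. apply jet_ext; simpl; field.
Qed.

Definition pos_terms (p : Z -> R) (x : R) (k : nat) : R := p (Z.of_nat k) * exp (INR k * x).

Definition neg_terms (p : Z -> R) (x : R) (k : nat) : R :=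
  p (- Z.of_nat (S k))%Z * exp (- INR (S k) * x).

Definition zseries (p : Z -> R) (x v : R) : Prop :=
  exists A B, is_series (pos_terms p x) A /\ is_series (neg_terms p x) B /\ A + B = v.

Lemma is_series_ext_R (a b : nat -> R) (l : R) :
  (forall n, a n = b n) -> is_series a l -> is_series b l.
Proof. apply is_series_ext. Qed.

Lemma is_series_scal_R (c : R) (a : nat -> R) (l : R) :
  is_series a l -> is_series (fun n => c * a n) (c * l).
Proof. intros H. exact (is_series_scal_l c a l H). Qed.

Lemma is_series_plus_R (a b : nat -> R) (la lb : R) :
  is_series a la -> is_series b lb -> is_series (fun n => a n + b n) (la + lb).
Proof. intros Ha Hb. exact (is_series_plus a b la lb Ha Hb). Qed.

Lemma is_series_from_succ (a : nat -> R) (l : R) :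
  is_series (fun k => a (S k)) l -> is_series a (l + a 0%nat).
Proof.
  intros H. apply is_series_decr_1.
  match goal with |- is_series _ ?v => replace v with l by (unfold plus, opp; simpl; ring) end.
  exact H.
Qed.

Lemma is_series_succ (a : nat -> R) (l : R) :
  is_series a l -> is_series (fun k => a (S k)) (l - a 0%nat).
Proof.
  intros H. apply is_series_incr_1.
  match goal with |- is_series _ ?v => replace v with l by (unfold plus; simpl; ring) end.
  exact H.
Qed.

Lemma is_series_zero : is_series (fun _ => 0) 0.
Proof.
  assert (Hq : Rabs (/ 2) < 1) by (rewrite Rabs_right; lra).
  pose proof (is_series_scal_R 0 _ _ (is_series_geom _ Hq)) as H. rewrite Rmult_0_l in H.
  exact (is_series_ext_R _ _ _ (fun n => Rmult_0_l _) H).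
Qed.

Lemma zseries_add p q x u v :
  zseries p x u -> zseries q x v -> zseries (fun j => p j + q j) x (u + v).
Proof.
  intros (A1 & B1 & HA1 & HB1 & E1) (A2 & B2 & HA2 & HB2 & E2).
  exists (A1 + A2), (B1 + B2). split; [|split; [|lra]].
  - apply (is_series_ext_R (fun k => pos_terms p x k + pos_terms q x k));
      [intros; unfold pos_terms; ring|now apply is_series_plus_R].
  - apply (is_series_ext_R (fun k => neg_terms p x k + neg_terms q x k));
      [intros; unfold neg_terms; ring|now apply is_series_plus_R].
Qed.

Lemma zseries_scal c p x v : zseries p x v -> zseries (fun j => c * p j) x (c * v).
Proof.
  intros (A & B & HA & HB & E). exists (c * A), (c * B). split; [|split; [|subst; ring]].
  - apply (is_series_ext_R (fun k => c * pos_terms p x k));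
      [intros; unfold pos_terms; ring|now apply is_series_scal_R].
  - apply (is_series_ext_R (fun k => c * neg_terms p x k));
      [intros; unfold neg_terms; ring|now apply is_series_scal_R].
Qed.

Lemma exp_succ_mul k x : exp (INR (S k) * x) = exp x * exp (INR k * x).
Proof. rewrite <- exp_plus, S_INR. f_equal. ring. Qed.

Lemma exp_neg_succ_mul k x : exp (- INR (S k) * x) = exp (- x) * exp (- INR k * x).
Proof. rewrite <- exp_plus, S_INR. f_equal. ring. Qed.

Lemma exp_mul_exp_opp x : exp x * exp (- x) = 1.
Proof. rewrite <- exp_plus, Rplus_opp_r. apply exp_0. Qed.

Lemma zseries_shift_pred p x v : zseries p x v -> zseries (fun j => p (j - 1)%Z) x (exp x * v).
Proof.
  intros (A & B & HA & HB & E).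
  exists (exp x * A + pos_terms (fun j => p (j - 1)%Z) x 0), (exp x * (B - neg_terms p x 0)).
  split; [|split].
  - apply is_series_from_succ.
    apply (is_series_ext_R (fun k => exp x * pos_terms p x k)); [|now apply is_series_scal_R].
    intros k. unfold pos_terms. cbv beta. rewrite exp_succ_mul.
    replace (Z.of_nat (S k) - 1)%Z with (Z.of_nat k) by lia. ring.
  - apply (is_series_ext_R (fun k => exp x * neg_terms p x (S k)));
      [|now apply is_series_scal_R, is_series_succ].
    intros k. unfold neg_terms. cbv beta.
    rewrite (exp_neg_succ_mul (S k)), <- Rmult_assoc, (Rmult_comm (exp x)).
    rewrite Rmult_assoc, <- (Rmult_assoc (exp x)), exp_mul_exp_opp.
    replace (- Z.of_nat (S (S k)))%Z with (- Z.of_nat (S k) - 1)%Z by lia. ring.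
  - subst v. unfold pos_terms, neg_terms. simpl. rewrite Rmult_0_l, exp_0.
    replace (- (1) * x) with (- x) by ring.
    transitivity (exp x * (A + B) + p (-1)%Z * (1 - exp x * exp (- x))); [ring|].
    rewrite exp_mul_exp_opp. ring.
Qed.

Lemma zseries_shift_succ p x v : zseries p x v -> zseries (fun j => p (j + 1)%Z) x (exp (- x) * v).
Proof.
  intros (A & B & HA & HB & E).
  exists (exp (- x) * (A - pos_terms p x 0)), (exp (- x) * B + neg_terms (fun j => p (j + 1)%Z) x 0).
  split; [|split].
  - apply (is_series_ext_R (fun k => exp (- x) * pos_terms p x (S k)));
      [|now apply is_series_scal_R, is_series_succ].
    intros k. unfold pos_terms. cbv beta. rewrite exp_succ_mul.
    replace (Z.of_nat (S k)) with (Z.of_nat k + 1)%Z by lia.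
    transitivity (p (Z.of_nat k + 1)%Z * exp (INR k * x) * (exp x * exp (- x)));
      [ring|rewrite exp_mul_exp_opp; ring].
  - apply is_series_from_succ.
    apply (is_series_ext_R (fun k => exp (- x) * neg_terms p x k)); [|now apply is_series_scal_R].
    intros k. unfold neg_terms. cbv beta. rewrite (exp_neg_succ_mul (S k)).
    replace (- Z.of_nat (S (S k)) + 1)%Z with (- Z.of_nat (S k))%Z by lia. ring.
  - subst v. unfold pos_terms, neg_terms. simpl. rewrite Rmult_0_l, exp_0.
    replace (- (1) * x) with (- x) by ring. ring.
Qed.

Lemma zseries_ext p q x v : (forall j, p j = q j) -> zseries p x v -> zseries q x v.
Proof.
  intros Hpq (A & B & HA & HB & E). exists A, B. split; [|split; [|exact E]].
  - apply (is_series_ext_R (pos_terms p x)); [intros; unfold pos_terms; now rewrite Hpq|exact HA].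
  - apply (is_series_ext_R (neg_terms p x)); [intros; unfold neg_terms; now rewrite Hpq|exact HB].
Qed.

Lemma zseries_shift_mix a b x u v :
  zseries a x u -> zseries b x v -> zseries (shift_mix a b) x (/ 2 * (exp x * u + exp (- x) * v)).
Proof.
  intros Ha Hb.
  apply (zseries_ext (fun j => / 2 * (a (j - 1)%Z + b (j + 1)%Z))); [intros; unfold shift_mix; field|].
  apply zseries_scal, zseries_add; [apply zseries_shift_pred|apply zseries_shift_succ]; assumption.
Qed.

Lemma zseries_dens0 x : zseries dens0 x 1.
Proof.
  exists (0 + pos_terms dens0 x 0), 0. split; [|split].
  - apply is_series_from_succ, (is_series_ext_R (fun _ => 0)); [|exact is_series_zero].
    intros k. unfold pos_terms, dens0. destruct (Z.eqb_spec (Z.of_nat (S k)) 0); [lia|ring].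
  - apply (is_series_ext_R (fun _ => 0)); [|exact is_series_zero].
    intros k. unfold neg_terms, dens0. destruct (Z.eqb_spec (- Z.of_nat (S k)) 0); [lia|ring].
  - unfold pos_terms, dens0. simpl. rewrite Rmult_0_l, exp_0. ring.
Qed.

Lemma exp_neg_mul_pow n x : exp (- INR n * x) = exp (- x) ^ n.
Proof.
  induction n as [|n IH]; [simpl; rewrite Ropp_0, Rmult_0_l; apply exp_0|].
  rewrite exp_neg_succ_mul, IH. reflexivity.
Qed.

Lemma exp_half_lt_2 : exp (1 / 2) < 2.
Proof.
  pose proof exp_le_3. pose proof (exp_pos (1 / 2)).
  assert (exp (1 / 2) * exp (1 / 2) = exp 1) by (rewrite <- exp_plus; f_equal; field).
  nra.
Qed.

Lemma exp_neg_lt_2 x : near0 x -> exp (- x) < 2.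
Proof.
  intros Hx. apply Rabs_def2 in Hx. pose proof exp_half_lt_2.
  assert (exp (- x) < exp (1 / 2)) by (apply exp_increasing; lra). lra.
Qed.

Lemma zseries_dens1 x : near0 x -> zseries dens1 x (exp x / (2 - exp (- x))).
Proof.
  intros Hx. pose proof (exp_neg_lt_2 x Hx). pose proof (exp_pos (- x)). set (y := exp (- x)) in *.
  exists (0 + pos_terms dens1 x 1 + pos_terms dens1 x 0), (y / 8 * / (1 - y / 2)). split; [|split].
  - apply is_series_from_succ, is_series_from_succ, (is_series_ext_R (fun _ => 0));
      [|exact is_series_zero].
    intros k. unfold pos_terms, dens1. destruct (Z.leb_spec (Z.of_nat (S (S k))) 1); [lia|ring].
  - apply (is_series_ext_R (fun k => y / 8 * (y / 2) ^ k)).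
    + intros k. unfold neg_terms, dens1. destruct (Z.leb_spec (- Z.of_nat (S k)) 1); [|lia].
      replace (Z.to_nat (2 - - Z.of_nat (S k))) with (3 + k)%nat by lia.
      rewrite exp_neg_mul_pow, pow_add. fold y. unfold Rdiv. rewrite Rpow_mult_distr. simpl. field.
    + apply is_series_scal_R, is_series_geom. rewrite Rabs_right; lra.
  - assert (Hex : exp x = / y) by (unfold y; rewrite exp_Ropp, Rinv_inv; reflexivity).
    unfold pos_terms, dens1. simpl. rewrite Rmult_0_l, exp_0, Rmult_1_l, Hex. field. lra.
Qed.

Lemma mgf_zseries t x v : zseries (density t) x v -> mgf t x = v.
Proof.
  intros (A & B & HA & HB & E). unfold mgf. rewrite <- E.
  rewrite <- (is_series_unique _ _ HA), <- (is_series_unique _ _ HB).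
  f_equal; apply Series_ext; intros n; [unfold pos_terms|unfold neg_terms]; now rewrite delta_density.
Qed.

Definition mgf_tower (t : nat) (f : nat -> R -> R) : Prop :=
  derivative_tower f /\ tower_jet f = jphi t /\
  forall x, near0 x -> 0 < f 0%nat x /\ zseries (density t) x (f 0%nat x).

Lemma mgf_tower_0 : mgf_tower 0 (tconst 1).
Proof.
  split; [apply tower_const|split; [apply tower_jet_const|]].
  intros x _. split; [simpl; lra|]. rewrite density_0. apply zseries_dens0.
Qed.

Definition phi1_tower : nat -> R -> R :=
  tmul (texp 1) (tcomp inv_derivs (tadd (tconst 2) (tscal (-1) (texp (-1))))).

Lemma mgf_tower_1 : mgf_tower 1 phi1_tower.
Proof.
  assert (Hden : forall x, tadd (tconst 2) (tscal (-1) (texp (-1))) 0%nat x = 2 - exp (- x)).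
  { intros x. unfold tadd, tconst, tscal, texp. simpl. replace (-1 * x) with (- x) by ring. ring. }
  assert (Hpos : forall x, near0 x -> 0 < 2 - exp (- x))
    by (intros x Hx; pose proof (exp_neg_lt_2 x Hx); lra).
  split; [|split].
  - apply tower_mul; [apply tower_exp|]. apply tower_inv.
    + apply tower_add; [apply tower_const|apply tower_scal, tower_exp].
    + intros x Hx. rewrite Hden. now apply Hpos.
  - unfold phi1_tower.
    rewrite tower_jet_mul, tower_jet_inv, tower_jet_add, tower_jet_scal, tower_jet_const.
    + now rewrite !tower_jet_exp.
    + rewrite Hden, Ropp_0, exp_0. ring.
  - intros x Hx. specialize (Hpos x Hx).
    replace (phi1_tower 0%nat x) with (exp x / (2 - exp (- x))).
    + split; [apply Rdiv_lt_0_compat; [apply exp_pos|exact Hpos]|]. apply zseries_dens1, Hx.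
    + unfold phi1_tower, tmul, tcomp, faa_di_bruno, inv_derivs. rewrite Hden.
      unfold texp. simpl. replace (1 * x) with x by ring. field. lra.
Qed.

Lemma mgf_tower_double t f : mgf_tower t f -> mgf_tower (2 * t) f.
Proof. unfold mgf_tower. now rewrite density_double, jphi_double. Qed.

Definition tmix (f g : nat -> R -> R) : nat -> R -> R :=
  tscal (/ 2) (tadd (tmul (texp 1) f) (tmul (texp (-1)) g)).

Lemma mgf_tower_double_succ t f g :
  mgf_tower t f -> mgf_tower (S t) g -> mgf_tower (2 * t + 1) (tmix f g).
Proof.
  intros (Hf & Jf & Pf) (Hg & Jg & Pg). split; [|split].
  - apply tower_scal, tower_add; apply tower_mul; auto using tower_exp.
  - unfold tmix. rewrite tower_jet_scal, tower_jet_add, !tower_jet_mul, !tower_jet_exp, Jf, Jg.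
    symmetry. apply jphi_double_succ_mix.
  - intros x Hx. destruct (Pf x Hx) as [Pf0 Sf]. destruct (Pg x Hx) as [Pg0 Sg].
    replace (tmix f g 0%nat x) with (/ 2 * (exp x * f 0%nat x + exp (- x) * g 0%nat x)).
    + split.
      * pose proof (exp_pos x). pose proof (exp_pos (- x)).
        apply Rmult_lt_0_compat; [lra|]. apply Rplus_lt_0_compat; apply Rmult_lt_0_compat; assumption.
      * rewrite density_double_succ. now apply zseries_shift_mix.
    + unfold tmix, tscal, tadd, tmul, texp. simpl.
      replace (1 * x) with x by ring. replace (-1 * x) with (- x) by ring. ring.
Qed.

Lemma mgf_tower_exists t : exists f, mgf_tower t f.
Proof.
  induction t as [| |t [f Hf]|t [f Hf] [g Hg]] using nat_binary_ind.
  - exists (tconst 1). exact mgf_tower_0.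
  - exists phi1_tower. exact mgf_tower_1.
  - exists f. now apply mgf_tower_double.
  - exists (tmix f g). now apply mgf_tower_double_succ.
Qed.

(** * Cumulants *)

Definition jcoef (a : jet) (k : nat) : R :=
  match k with
  | 0%nat => jc0 a | 1%nat => jc1 a | 2%nat => jc2 a | 3%nat => jc3 a | 4%nat => jc4 a | _ => jc5 a
  end.

Lemma tower_jet_coef f k : (k <= 5)%nat -> f k 0 = INR (fact k) * jcoef (tower_jet f) k.
Proof. intros Hk. destruct k as [|[|[|[|[|[|k]]]]]]; try lia; simpl; field. Qed.

Lemma jcoef_le_jnorm a k : (k <= 5)%nat -> Rabs (jcoef a k) <= 100 ^ k * jnorm a.
Proof.
  intros Hk. destruct a as [a0 a1 a2 a3 a4 a5].
  unfold jnorm, jabs, jdilate. cbn [jc0 jc1 jc2 jc3 jc4 jc5].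
  assert (Hw : forall n, Rabs ((/ 100) ^ n) = (/ 100) ^ n)
    by (intros; apply Rabs_right, Rle_ge, pow_le; lra).
  rewrite !Rabs_mult, !Hw, (Rabs_right (/ 100)) by lra.
  pose proof (Rabs_pos a0). pose proof (Rabs_pos a1). pose proof (Rabs_pos a2).
  pose proof (Rabs_pos a3). pose proof (Rabs_pos a4). pose proof (Rabs_pos a5).
  destruct k as [|[|[|[|[|[|k]]]]]]; try lia; simpl; lra.
Qed.

Lemma cumulant_jlog_jphi t k : (k <= 5)%nat -> cumulant t k = INR (fact k) * jcoef (jlog (jphi t)) k.
Proof.
  intros Hk. destruct (mgf_tower_exists t) as (f & Hf & Jf & Pf).
  assert (Hf0 : f 0%nat 0 = 1) by (change (jc0 (tower_jet f) = 1); rewrite Jf; apply jphi_c0).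
  assert (HL : derivative_tower (tcomp ln_derivs f)) by (apply tower_ln; [exact Hf|apply Pf]).
  assert (H0 : near0 0) by (unfold near0; rewrite Rabs_R0; lra).
  unfold cumulant. rewrite (Derive_n_ext_loc _ (tcomp ln_derivs f 0%nat)).
  - rewrite Derive_n_tower, tower_jet_coef, tower_jet_ln, Jf by assumption. reflexivity.
  - apply (filter_imp near0); [|exact (near0_locally 0 H0)]. intros y Hy.
    rewrite (mgf_zseries t y (f 0%nat y)) by apply Pf, Hy. reflexivity.
Qed.

Lemma cumulant_bound t k :
  (k <= 5)%nat -> Rabs (cumulant t k) <= INR (fact k) * 100 ^ k * INR (blocks t).
Proof.
  intros Hk.
  rewrite cumulant_jlog_jphi, Rabs_mult, (Rabs_right (INR _)) by (apply Rle_ge, pos_INR || exact Hk).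
  rewrite Rmult_assoc. apply Rmult_le_compat_l; [apply pos_INR|].
  eapply Rle_trans; [apply jcoef_le_jnorm, Hk|].
  apply Rmult_le_compat_l; [apply pow_le; lra|apply jnorm_jlog_jphi].
Qed.

Lemma fact_pow_le k : (k <= 5)%nat -> INR (fact k) * 100 ^ k <= INR (fact 5) * 100 ^ 5.
Proof. intros Hk. destruct k as [|[|[|[|[|[|k]]]]]]; try lia; simpl; lra. Qed.

Theorem corollary2p3 :
  exists C : R, forall t : nat,
    Rabs (cumulant t 2) <= C * INR (blocks t) /\
    Rabs (cumulant t 3) <= C * INR (blocks t) /\
    Rabs (cumulant t 4) <= C * INR (blocks t) /\
    Rabs (cumulant t 5) <= C * INR (blocks t).
Proof.
  exists (INR (fact 5) * 100 ^ 5). intros t.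
  assert (H : forall k, (k <= 5)%nat -> Rabs (cumulant t k) <= INR (fact 5) * 100 ^ 5 * INR (blocks t)).
  { intros k Hk. eapply Rle_trans; [apply cumulant_bound, Hk|].
    apply Rmult_le_compat_r; [apply pos_INR|apply fact_pow_le, Hk]. }
  repeat split; apply H; lia.
Qed.
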